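(* Let $m\ge2$ be an integer, let $x_0,\dots,x_N\in[0,1]$ be distinct nodes, and let $$G(x)=\frac{\operatorname{sign}x}{2}\left(\frac{e^x-e^{-x}}{2}-\sum_{k=1}^{m-1}\frac{x^{2k-1}}{(2k-1)!}\right).$$ Let $M$ be the $(N+1)\times(N+1)$ matrix $M=(G(x_\beta-x_\gamma))_{\beta,\gamma=0}^N$ and let $S$ be the $m\times(N+1)$ matrix whose rows are $(x_0^{\alpha},\dots,x_N^{\alpha})$ for $\alpha=0,1,\dots,m-2$ and, as last row, $(e^{-x_0},\dots,e^{-x_N})$. If $S$ has a right inverse, then the $(N+1+m)\times(N+1+m)$ matrix $$Q=\begin{pmatrix}M&S^*\\ S&0\end{pmatrix}$$ is nonsingular, where $S^*$ denotes the transpose of $S$.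
   Context: $Q$ is the matrix of the linear system $\sum_\gamma\overline C_\gamma G(x_\beta-x_\gamma)+\sum_{\alpha=0}^{m-2}\lambda_\alpha x_\beta^\alpha+\lambda_{m-1}e^{-x_\beta}=F(x_\beta)$ ($\beta=0,\dots,N$), $\sum_\gamma\overline C_\gamma x_\gamma^\alpha=0$ ($\alpha=0,\dots,m-2$), $\sum_\gamma\overline C_\gamma e^{-x_\gamma}=0$, which arises in minimizing the norm of the error functional of the quadrature formula $\int_0^1\varphi\,dx\cong\sum_\beta C_\beta\varphi(x_\beta)$ in the space $W_2^{(m,m-1)}(0,1)$ with norm $\left(\int_0^1(\varphi^{(m)}+\varphi^{(m-1)})^2dx\right)^{1/2}$. *)

From HB Require Import structures.
From mathcomp Require Import all_boot all_order all_algebra.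
From mathcomp Require Import reals.
From mathcomp Require Import sequences exp.
Set Implicit Arguments. Unset Strict Implicit. Unset Printing Implicit Defensive.
Import Order.TTheory GRing.Theory Num.Theory.
Local Open Scope ring_scope.

Definition Gker (R : realType) (m : nat) (x : R) : R :=
  Num.sg x / 2 *
  ((expR x - expR (- x)) / 2
   - \sum_(1 <= k < m) x ^+ (2 * k - 1) / ((2 * k - 1)`!)%:R).

Definition Gmat (R : realType) (m N : nat) (x : 'I_N.+1 -> R) : 'M[R]_N.+1 :=
  \matrix_(b, g) Gker m (x b - x g).

Definition Smat (R : realType) (m N : nat) (x : 'I_N.+1 -> R) : 'M[R]_(m, N.+1) :=
  \matrix_(i < m, j < N.+1) if (i < m.-1)%N then x j ^+ i else expR (- x j).

Definition Qmat (R : realType) (m N : nat) (x : 'I_N.+1 -> R) : 'M[R]_(N.+1 + m) :=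
  block_mx (Gmat m x) (Smat m x)^T (Smat m x) 0.

From mathcomp Require Import all_boot all_order all_algebra.
From mathcomp Require Import reals boolp functions.
From mathcomp Require Import normedtype sequences derive realfun exp.
From mathcomp Require Import zify ring.
Set Implicit Arguments. Unset Strict Implicit. Unset Printing Implicit Defensive.
Import Order.TTheory GRing.Theory Num.Theory numFieldNormedType.Exports.
Local Open Scope ring_scope.

(* If [Q (c, l) = 0] then [S c = 0] and [M c = - S^T l], hence [c^T M c = 0];
   as [S^T] is injective, it suffices to show that [(-1)^m c^T M c > 0] whenever
   [S c = 0] and [c <> 0].  Let [u y = \sum_g c_g G (y - x_g)] and
   [L = D^m + D^(m-1)].  Lagrange's identity for [L], with the bilinear
   concomitant taken against solutions of the adjoint equation, gives an explicit
   function [energy] whose derivative between the nodes is [2 (L u)^2].  The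
   conditions [S c = 0] make it vanish to the left of all nodes, while to the
   right of them it equals [2 (-1)^m c^T M c].  It is nondecreasing, and
   strictly increasing just left of the rightmost node [x_top] with
   [c_top <> 0], because there [L u] is a nonzero multiple of a function
   without negative zeros. *)

Section RealDerivatives.
Variable R : realType.
Implicit Types (f g : R -> R) (a b c y df d : R).

Lemma eq_is_derive f g y df d :
  (forall t, f t = g t) -> df = d -> is_derive y 1 f df -> is_derive y 1 g d.
Proof. by move=> /funext <- <-. Qed.

Lemma is_deriveMl c f y df :
  is_derive y 1 f df -> is_derive y 1 (fun t => c * f t) (c * df).
Proof. exact: is_deriveZ. Qed.

Lemma is_derive_sumr n (h : 'I_n -> R -> R) (dh : 'I_n -> R) y :
  (forall i, is_derive y 1 (h i) (dh i)) ->
  is_derive y 1 (fun t => \sum_(i < n) h i t) (\sum_(i < n) dh i).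
Proof. by move=> /is_derive_sum; rewrite fct_sumE. Qed.

Lemma is_derive_translate f c y d :
  is_derive (y - c) 1 f d -> is_derive y 1 (fun t => f (t - c)) d.
Proof.
move=> fd; rewrite -[d]mulr1; apply: (@is_derive1_comp _ f (fun t => t - c) y d 1 fd).
have := is_deriveB (is_derive_id y 1) (is_derive_cst c y 1).
by apply: eq_is_derive; rewrite ?subr0.
Qed.

Lemma is_derive_expRN y : is_derive y 1 (fun t => expR (- t)) (- expR (- y)).
Proof. by rewrite -mulrN1; apply: (@is_derive1_comp _ expR (fun t => - t) y). Qed.

Lemma derive_ge0_le f (f' : R -> R) a b : (forall t : R, is_derive t 1 f (f' t)) ->
  (forall t, a < t < b -> 0 <= f' t) -> a <= b -> f a <= f b.
Proof.
move=> fd f'_ge0 ab.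
have f_derivable t : derivable f t 1 by case: (fd t).
apply: (@ger0_derive1_le_cc _ f a b); rewrite ?in_itv /= ?lexx ?ab //.
- by move=> t; rewrite in_itv /= derive1E; case: (fd t) => _ ->; apply: f'_ge0.
- exact: derivable_within_continuous.
Qed.

Lemma derive_gt0_lt f (f' : R -> R) a b : (forall t : R, is_derive t 1 f (f' t)) ->
  (forall t, a < t < b -> 0 < f' t) -> a < b -> f a < f b.
Proof.
move=> fd f'_gt0 ab.
have f_derivable t : derivable f t 1 by case: (fd t).
apply: (@gtr0_derive1_lt_cc _ f a b); rewrite ?in_itv /= ?lexx ?ltW //.
- by move=> t; rewrite in_itv /= derive1E; case: (fd t) => _ ->; apply: f'_gt0.
- exact: derivable_within_continuous.
Qed.

End RealDerivatives.

Lemma sum_odd_ord (V : nmodType) (f : nat -> V) n :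
  \sum_(i < 2 * n) (if odd i then f i else 0) = \sum_(k < n) f (2 * k + 1)%N.
Proof.
elim: n => [|n IH]; first by rewrite muln0 !big_ord0.
have -> : (2 * n.+1 = (2 * n).+2)%N by lia.
by rewrite !big_ord_recr /= IH oddM /= addr0 addn1.
Qed.

Section Kernel.
Variables (R : realType) (m : nat).
Hypothesis m_ge2 : (2 <= m)%N.
Implicit Types (s z : R).

Definition sinh_head : {poly R} :=
  \poly_(i < 2 * m - 2) (if odd i then (i`!%:R)^-1 else 0).

Definition gder (i : nat) s : R :=
  (expR s - (-1) ^+ i * expR (- s)) / 2 - sinh_head^`(i).[s].

Lemma sinh_headE s :
  sinh_head.[s] = \sum_(1 <= k < m) s ^+ (2 * k - 1) / ((2 * k - 1)`!)%:R.
Proof.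
rewrite horner_poly.
have -> : (2 * m - 2 = 2 * m.-1)%N by lia.
under eq_bigr => i _ do rewrite (fun_if (fun c => c * s ^+ i)) mul0r.
rewrite (sum_odd_ord (fun i => (i`!%:R)^-1 * s ^+ i)).
rewrite big_add1 big_mkord.
by apply: eq_bigr => k _; rewrite mulrC; congr (_ ^+ _ / (_`!)%:R); lia.
Qed.

Lemma Gker_gder s : Gker m s = Num.sg s / 2 * gder 0 s.
Proof. by rewrite /Gker /gder expr0 mul1r derivn0 sinh_headE. Qed.

Lemma gder_derive i s : is_derive s 1 (gder i) (gder i.+1 s).
Proof.
have := is_deriveB (is_deriveMl (2^-1 : R) (is_deriveB (is_derive_expR s)
    (is_deriveMl ((-1) ^+ i) (is_derive_expRN s))))
  (is_derive_poly (sinh_head^`(i)) s).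
by apply: eq_is_derive => [t|]; rewrite /gder /= ?derivnS ?exprS ?fctE; ring.
Qed.

Lemma gder_at0 i : gder i 0 = (odd i && (2 * m - 2 <= i)%N)%:R.
Proof.
rewrite /gder expR0 oppr0 expR0 mulr1 horner_coef0 coef_derivn addn0 ffactnn.
rewrite coef_poly -signr_odd.
have fact_neq0 : (i`!%:R : R) != 0 by rewrite pnatr_eq0 -lt0n fact_gt0.
case: (odd i); last by rewrite expr0 subrr mul0r if_same mul0rn subr0.
rewrite expr1 opprK /=; case: ltnP => _ /=.
- by rewrite -mulr_natr; field.
- by rewrite mul0rn; field.
Qed.

Lemma gder_at0_low i : (i <= 2 * m - 2)%N -> gder i 0 = 0.
Proof.
move=> hi; rewrite gder_at0; case: leqP => [hi'|]; last by rewrite andbF.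
have -> : i = (m.-1).*2 by rewrite -mul2n; lia.
by rewrite odd_double.
Qed.

Lemma gder_at0_top : gder (2 * m - 1) 0 = 1.
Proof.
rewrite gder_at0 leq_sub2l //.
have -> : (2 * m - 1 = (m.-1).*2.+1)%N by rewrite -mul2n; lia.
by rewrite /= odd_double.
Qed.

Lemma gder_high i s : (2 * m - 2 <= i)%N ->
  gder i s = (expR s - (-1) ^+ i * expR (- s)) / 2.
Proof.
move=> hi; rewrite /gder derivn_poly0 ?horner0 ?subr0 //.
exact: leq_trans (size_poly _ _) hi.
Qed.

Lemma gder_periodic i s : (2 * m - 2 <= i)%N -> gder i.+2 s = gder i s.
Proof.
move=> hi; have hi2 : (2 * m - 2 <= i.+2)%N by lia.
by rewrite !gder_high // !exprS !mulN1r opprK.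
Qed.

Lemma sgr_gder k z (b : bool) : (k <= 2 * m - 2)%N ->
  (if b then z <= 0 else 0 <= z) -> Num.sg z * gder k z = (-1) ^+ b * gder k z.
Proof.
move=> hk hz; have [->|z_neq0] := eqVneq z 0; first by rewrite gder_at0_low // !mulr0.
case: b hz => hz; first by rewrite ltr0_sg // lt_neqAle z_neq0.
by rewrite gtr0_sg // lt_neqAle eq_sym z_neq0.
Qed.

Definition hder (i : nat) s : R := gder i.+1 s + gder i s.

Lemma hderE i s : hder i s = expR s - (sinh_head^`(i.+1) + sinh_head^`(i)).[s].
Proof. by rewrite /hder /gder hornerD exprS; field. Qed.

Lemma size_hder_poly i : (m.-1 <= i)%N ->
  (size (sinh_head^`(i.+1) + sinh_head^`(i))%R <= m.-1)%N.
Proof.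
move=> hi; apply/leq_sizeP => j hj.
rewrite coefD !coef_derivn !coef_poly.
by rewrite !ifN ?mul0rn ?addr0 // -leqNgt; lia.
Qed.

Lemma hder_derive i s : is_derive s 1 (hder i) (hder i.+1 s).
Proof. exact: is_deriveD (gder_derive i.+1 s) (gder_derive i s). Qed.

Lemma hder_at0 i : (i < 2 * m - 2)%N -> hder i 0 = 0.
Proof. by move=> hi; rewrite /hder !gder_at0_low ?addr0 // ltnW. Qed.

Lemma hder_top : hder (2 * m - 2) =1 expR.
Proof. by move=> s; rewrite /hder !gder_high // exprS; field. Qed.

Lemma hder_sign n z : (n <= m.-1)%N -> z < 0 ->
  0 < (-1) ^+ n * hder (2 * m - 2 - n) z.
Proof.
elim: n z => [|n IH] z hn z_lt0; first by rewrite mul1r subn0 hder_top expR_gt0.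
set k := (2 * m - 2 - n.+1)%N.
have hk : k.+1 = (2 * m - 2 - n)%N by rewrite /k; lia.
have hd (t : R) : is_derive t 1 (fun y => - ((-1) ^+ n.+1 * hder k y))
    ((-1) ^+ n * hder (2 * m - 2 - n) t).
  have := is_deriveN (is_deriveMl ((-1) ^+ n.+1) (hder_derive k t)).
  by apply: eq_is_derive; rewrite // hk exprS; ring.
have := derive_gt0_lt hd _ z_lt0.
rewrite hder_at0 /k; last by lia.
rewrite mulr0 oppr0 oppr_lt0; apply=> t /andP [_ t_lt0].
by apply: IH => //; lia.
Qed.

Lemma hder_neq0 z : z < 0 -> hder m.-1 z != 0.
Proof.
move=> z_lt0; have := hder_sign (leqnn m.-1) z_lt0.
have -> : (2 * m - 2 - m.-1 = m.-1)%N by lia.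
by apply: contraTneq => ->; rewrite mulr0 ltxx.
Qed.

End Kernel.

Section Concomitant.
Variables (R : realType) (m : nat).
Hypothesis m_ge2 : (2 <= m)%N.
Implicit Types (a y t : R) (U : nat -> R -> R).

Definition adj (j : nat) a y : R := (-1) ^+ (m.-1 + j) * hder m (m.-1 + j) (y - a).

Lemma adj_derive j a t : is_derive t 1 (adj j a) (- adj j.+1 a t).
Proof.
have := is_deriveMl ((-1) ^+ (m.-1 + j))
  (is_derive_translate (hder_derive m (m.-1 + j) (t - a))).
by apply: eq_is_derive => [y|]; rewrite /adj // addnS exprS; ring.
Qed.

Lemma adj_diag j a : (j < m.-1)%N -> adj j a a = 0.
Proof. by move=> hj; rewrite /adj subrr hder_at0 ?mulr0 //; lia. Qed.

Lemma adj_diag_last a : adj m.-1 a a = 1.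
Proof.
rewrite /adj subrr /hder.
have -> : (m.-1 + m.-1 = (m.-1).*2)%N by rewrite addnn.
have -> : ((m.-1).*2.+1 = 2 * m - 1)%N by rewrite -mul2n; lia.
rewrite gder_at0_top // gder_at0_low //; last by rewrite -mul2n; lia.
by rewrite addr0 mulr1 -signr_odd odd_double.
Qed.

Lemma adj_wrap a y : adj m a y = - adj m.-1 a y.
Proof.
rewrite /adj /hder.
have -> : (m.-1 + m = (2 * m - 2).+1)%N by lia.
have -> : (m.-1 + m.-1 = 2 * m - 2)%N by lia.
rewrite gder_periodic // exprS; ring.
Qed.

(* The bilinear concomitant of [D^m + D^(m-1)] and its adjoint, evaluated on
   the adjoint solutions [adj j a] and a family [U k] standing for [D^k u]. *)
Definition concomitant U a y : R :=
  \sum_(j < m) adj j a y * U (m - j.+1)%N y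
  + \sum_(j < m.-1) adj j a y * U (m.-1 - j.+1)%N y.

Lemma telescope_adj_derive n U a t :
  (forall k (s : R), is_derive s 1 (U k) (U k.+1 s)) ->
  is_derive t 1 (fun y => \sum_(j < n) adj j a y * U (n - j.+1)%N y)
    (adj 0 a t * U n t - adj n a t * U 0%N t).
Proof.
move=> U_derive.
have := is_derive_sumr (fun j : 'I_n => is_deriveM (adj_derive j a t) (U_derive (n - j.+1)%N t)).
apply: eq_is_derive => [y|]; first by under eq_bigr do rewrite fctE.
pose F k := adj k a t * U (n - k)%N t.
have -> : adj 0 a t * U n t - adj n a t * U 0%N t = - (F n - F 0%N).
  by rewrite /F subn0 subnn opprB.
rewrite -(telescope_sumr (fun k => F k) (leq0n n)) big_mkord -sumrN.
apply: eq_bigr => j _; rewrite /F.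
have -> : ((n - j.+1).+1 = n - j)%N by have := ltn_ord j; lia.
rewrite /GRing.scale /=; ring.
Qed.

Lemma concomitant_derive U a t : (forall k (s : R), is_derive s 1 (U k) (U k.+1 s)) ->
  is_derive t 1 (concomitant U a) (adj 0 a t * (U m t + U m.-1 t)).
Proof.
move=> U_derive.
have := is_deriveD (telescope_adj_derive m a t U_derive)
  (telescope_adj_derive m.-1 a t U_derive).
by apply: eq_is_derive => [y|]; rewrite ?fctE // adj_wrap; ring.
Qed.

Lemma eq_concomitant U V a y : (forall k, (k <= m.-1)%N -> U k y = V k y) ->
  concomitant U a y = concomitant V a y.
Proof.
move=> eqUV; rewrite /concomitant.
by congr (_ + _); apply: eq_bigr => j _; rewrite eqUV // ?leq_subr // -subn1 leq_sub2l.
Qed.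

Lemma concomitant_diag U a : concomitant U a a = U 0%N a.
Proof.
have last_lt_m : (m.-1 < m)%N by lia.
rewrite /concomitant (bigD1 (Ordinal last_lt_m)) //= adj_diag_last mul1r.
have -> : (m - m.-1.+1 = 0)%N by lia.
rewrite !big1 ?addr0 // => j; first by rewrite adj_diag ?mul0r.
move=> j_neq; rewrite adj_diag ?mul0r //.
have : (j : nat) != m.-1 by apply: contraNneq j_neq => hj; apply/eqP/val_inj.
by have := ltn_ord j; lia.
Qed.

End Concomitant.

Section Energy.
Variables (R : realType) (m N : nat) (x C : 'I_N.+1 -> R).
Hypothesis m_ge2 : (2 <= m)%N.
Hypothesis C_perp_poly : forall k, (k < m.-1)%N -> \sum_j C j * x j ^+ k = 0.
Hypothesis C_perp_expRN : \sum_j C j * expR (- x j) = 0.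
Implicit Types (a y t : R) (U : nat -> R -> R) (A : pred 'I_N.+1).

Lemma sum_perp_poly (q : {poly R}) y : (size q <= m.-1)%N ->
  \sum_j C j * q.[y - x j] = 0.
Proof.
move=> size_q; pose r := q \Po (y%:P - 'X).
have size_r : (size r <= m.-1)%N.
  apply: leq_trans (size_comp_poly_leq _ _) _.
  rewrite addrC size_polyDl ?size_polyC ?size_polyN ?size_polyX; last by case: (y == 0).
  by rewrite muln1; case: (size q) size_q => //= n; lia.
rewrite (eq_bigr (fun j => C j * r.[x j])); last first.
  by move=> j _; rewrite horner_comp !hornerE.
under eq_bigr => j _ do rewrite horner_coef mulr_sumr.
rewrite exchange_big big1 // => k _ /=.
under eq_bigr => j _ do rewrite mulrCA.
by rewrite -mulr_sumr C_perp_poly ?mulr0 // (leq_trans _ size_r).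
Qed.

Lemma sum_perp_expR y : \sum_j C j * expR (y - x j) = 0.
Proof.
under eq_bigr => j _ do rewrite expRD mulrCA.
by rewrite -mulr_sumr C_perp_expRN mulr0.
Qed.

Lemma sum_perp_hder i y : (m.-1 <= i)%N -> \sum_j C j * hder m i (y - x j) = 0.
Proof.
move=> hi; under eq_bigr => j _ do rewrite hderE mulrBr.
by rewrite sumrB sum_perp_expR sum_perp_poly ?subr0 // size_hder_poly.
Qed.

Lemma sum_perp_adj j y : \sum_b C b * adj m j (x b) y = 0.
Proof.
under eq_bigr => b _ do rewrite /adj mulrCA.
by rewrite -mulr_sumr sum_perp_hder ?mulr0 ?leq_addr.
Qed.

Lemma sum_perp_concomitant U y : \sum_b C b * concomitant m U (x b) y = 0.
Proof.
under eq_bigr => b _ do rewrite mulrDr !mulr_sumr.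
rewrite big_split /= [X in X + _]exchange_big [X in _ + X]exchange_big /= !big1 ?addr0 // => j _;
  by under eq_bigr => b _ do rewrite mulrA; rewrite -mulr_suml sum_perp_adj mul0r.
Qed.

(* [uder k] is twice the [k]-th derivative of [u y = \sum_g C g * Gker m (y - x g)]
   away from the nodes; on a node-free interval it agrees with the smooth
   [ubranch A], where [A] is the set of nodes to the right of the interval. *)
Definition uder k y : R := \sum_g C g * (Num.sg (y - x g) * gder m k (y - x g)).

Definition ubranch A k y : R := \sum_g C g * ((-1) ^+ A g * gder m k (y - x g)).

Definition Lbranch A y : R := ubranch A m y + ubranch A m.-1 y.

Lemma ubranch_derive A k t : is_derive t 1 (ubranch A k) (ubranch A k.+1 t).
Proof.
have := is_derive_sumr (fun g => is_deriveMl (C g) (is_deriveMl ((-1) ^+ A g)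
  (is_derive_translate (gder_derive m k (t - x g))))).
exact: eq_is_derive.
Qed.

Lemma LbranchE A y :
  Lbranch A y = - 2 * \sum_(g | A g) C g * hder m m.-1 (y - x g).
Proof.
rewrite /Lbranch /ubranch -big_split /= [in RHS]big_mkcond mulr_sumr.
rewrite -[LHS]subr0 -[X in _ - X = _](sum_perp_hder y (leqnn m.-1)) -sumrB.
apply: eq_bigr => g _; rewrite /hder prednK ?(ltnW m_ge2) //.
by case: (A g); rewrite /= ?expr0 ?expr1; ring.
Qed.

Definition energy y : R := (-1) ^+ m *
  \sum_b C b * (if y <= x b then concomitant m uder (x b) y else uder 0 (x b)).

Definition energy_branch A y : R := (-1) ^+ m *
  \sum_b C b * (if A b then concomitant m (ubranch A) (x b) y else uder 0 (x b)).

Lemma energy_branch_derive A t :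
  is_derive t 1 (energy_branch A) (Lbranch A t ^+ 2 / 2).
Proof.
have hb (b : 'I_N.+1) : is_derive t 1
    (fun y => C b * (if A b then concomitant m (ubranch A) (x b) y else uder 0 (x b)))
    (C b * (if A b then adj m 0 (x b) t * Lbranch A t else 0)).
  apply: is_deriveMl; case: (A b); last exact: is_derive_cst.
  exact/concomitant_derive/ubranch_derive.
have := is_deriveMl ((-1) ^+ m) (is_derive_sumr hb).
apply: eq_is_derive => //.
have adj0E b : adj m 0 (x b) t = - (-1) ^+ m * hder m m.-1 (t - x b).
  have sgn_m : (-1) ^+ m = - (-1) ^+ m.-1 :> R.
    by rewrite -{1}(prednK (ltnW m_ge2)) exprS mulN1r.
  by rewrite /adj addn0 sgn_m opprK.
rewrite (eq_bigr (fun b => - (-1) ^+ m * Lbranch A t *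
    (if A b then C b * hder m m.-1 (t - x b) else 0))); last first.
  by move=> b _; rewrite adj0E; case: (A b); rewrite ?mulr0 //; ring.
rewrite -mulr_sumr -big_mkcond.
have -> : \sum_(b | A b) C b * hder m m.-1 (t - x b) = - Lbranch A t / 2.
  by rewrite LbranchE; field.
by rewrite -signr_odd; case: (odd m); field.
Qed.

Definition nodefree a b := forall g, ~~ (a < x g < b).

Lemma uder_branch a b y k : a <= y -> y <= b -> nodefree a b ->
  (k <= 2 * m - 2)%N -> uder k y = ubranch (fun g => b <= x g) k y.
Proof.
move=> ay yb free hk; apply: eq_bigr => g _; congr (_ * _).
apply: sgr_gder => //=; case: (leP b (x g)) => [bx|xb].
  by rewrite subr_le0 (le_trans yb bx).
have := free g; rewrite xb andbT -leNgt => xa.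
by rewrite subr_ge0 (le_trans xa ay).
Qed.

Lemma energy_branchE a b y : a <= y -> y <= b -> nodefree a b ->
  energy y = energy_branch (fun g => b <= x g) y.
Proof.
move=> ay yb free; congr (_ * _); apply: eq_bigr => g _; congr (_ * _).
case: (leP b (x g)) => [bx|xb] /=.
  rewrite (le_trans yb bx); apply: eq_concomitant => k hk.
  by apply: (uder_branch ay yb free); lia.
have xa : x g <= a by have := free g; rewrite xb andbT -leNgt.
case: ifP => // yx; have -> : y = x g by apply/eqP; rewrite eq_le yx (le_trans xa ay).
by rewrite concomitant_diag.
Qed.

Lemma energy_le_nodefree a b : a <= b -> nodefree a b -> energy a <= energy b.
Proof.
move=> ab free; rewrite (energy_branchE (lexx a) ab free) (energy_branchE ab (lexx b) free).
apply: (derive_ge0_le (energy_branch_derive _)) => // t _.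
by rewrite divr_ge0 ?sqr_ge0.
Qed.

Lemma energy_lt_nodefree a b : a < b -> nodefree a b ->
  (forall t, a < t < b -> Lbranch (fun g => b <= x g) t != 0) -> energy a < energy b.
Proof.
move=> ab free L_neq0.
rewrite (energy_branchE (lexx a) (ltW ab) free) (energy_branchE (ltW ab) (lexx b) free).
apply: (derive_gt0_lt (energy_branch_derive _)) => // t /L_neq0 ?.
by rewrite divr_gt0 // exprn_even_gt0.
Qed.

Lemma energy_le a b : a <= b -> energy a <= energy b.
Proof.
pose inner a b := [pred g : 'I_N.+1 | a < x g < b].
suff : forall n a b, (#|inner a b| <= n)%N -> a <= b -> energy a <= energy b by apply.
elim=> [|n IH] {}a {}b n_inner ab.
  apply: energy_le_nodefree => // g; apply/negP => g_in.
  by move: n_inner; rewrite leqn0 => /eqP/card0_eq/(_ g); rewrite inE g_in.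
have [[g /andP [ag gb]]|no_inner] := pselect (exists g, a < x g < b); last first.
  by apply: energy_le_nodefree => // g; apply/negP => g_in; apply: no_inner; exists g.
have shrink c d : a <= c -> d <= b -> ~~ (c < x g < d) -> (#|inner c d| <= n)%N.
  move=> ac db g_out; rewrite -ltnS; apply: leq_trans n_inner; apply: proper_card.
  apply/properP; split; last by exists g; rewrite !inE ?ag ?gb.
  apply/fintype.subsetP => h; rewrite !inE => /andP [ch hd].
  by rewrite (le_lt_trans ac ch) (lt_le_trans hd db).
apply: (le_trans (IH a (x g) _ (ltW ag))); last apply: IH (ltW gb).
  by apply: shrink; rewrite ?ltxx ?andbF ?lexx ?ltW.
by apply: shrink; rewrite ?ltxx ?lexx ?ltW.
Qed.

Lemma energy_below lo : (forall g, lo <= x g) -> energy lo = 0.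
Proof.
move=> lo_le; rewrite /energy (eq_bigr (fun b => C b * concomitant m uder (x b) lo)).
  by rewrite sum_perp_concomitant mulr0.
by move=> b _; rewrite lo_le.
Qed.

Lemma energy_above hi : (forall g, x g <= hi) ->
  energy hi = (-1) ^+ m * \sum_b C b * uder 0 (x b).
Proof.
move=> le_hi; congr (_ * _); apply: eq_bigr => b _; case: ifP => // hi_le.
have -> : hi = x b by apply/eqP; rewrite eq_le hi_le le_hi.
by rewrite concomitant_diag.
Qed.

Lemma nodefree_left y : exists2 a, a < y & nodefree a y.
Proof.
exists (\big[Order.max/y - 1]_(g | x g < y) x g).
  by apply: bigmax_lt => //; rewrite ltrBlDr ltrDl.
move=> g; apply/negP => /andP [lt_g g_lt]; move: lt_g; apply/negP; rewrite -leNgt.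
exact: le_bigmax_cond.
Qed.

Lemma uder_form_gt0 : injective x -> (exists g, C g != 0) ->
  0 < (-1) ^+ m * \sum_b C b * uder 0 (x b).
Proof.
move=> x_inj [g0 C_g0].
have [top C_top top_max] := @arg_maxP _ _ _ g0 (fun g => C g != 0) x C_g0.
have C_right g : x top < x g -> C g = 0.
  by move=> lt_top; apply/eqP; apply: contraTT lt_top => /top_max; rewrite -leNgt.
have [a a_lt free] := nodefree_left (x top).
have L_neq0 t : a < t < x top -> Lbranch (fun g => x top <= x g) t != 0.
  case/andP => _ t_lt; rewrite LbranchE mulf_neq0 ?oppr_eq0 ?pnatr_eq0 //.
  rewrite (bigD1 top) //= big1 ?addr0.
    by rewrite mulf_neq0 // hder_neq0 // subr_lt0.
  move=> g /andP [top_le g_neq]; rewrite C_right ?mul0r //.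
  by rewrite lt_neqAle top_le andbT; apply: contra g_neq => /eqP/x_inj ->.
rewrite -(@energy_above (\big[Order.max/x top]_g x g)) => [|g]; last exact: le_bigmax.
rewrite -(@energy_below (\big[Order.min/a]_g x g)) => [|g]; last exact: bigmin_le.
apply: (le_lt_trans (energy_le (bigmin_le_id _ _ _ _))).
apply: (lt_le_trans (energy_lt_nodefree a_lt free L_neq0)).
exact/energy_le/le_bigmax.
Qed.

End Energy.

Section QuadraticForm.
Variables (R : realType) (m N : nat) (x : 'I_N.+1 -> R).
Hypothesis m_ge2 : (2 <= m)%N.

Lemma Gmat_form (c : 'cV[R]_N.+1) :
  (c^T *m Gmat m x *m c) 0 0 = (\sum_b c b 0 * uder m x (fun j => c j 0) 0 (x b)) / 2.
Proof.
rewrite mxE (eq_bigr (fun b => \sum_i c i 0 * Gmat m x i b * c b 0)); last first.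
  by move=> b _; rewrite mxE mulr_suml; apply: eq_bigr => i _; rewrite mxE.
rewrite exchange_big mulr_suml; apply: eq_bigr => i _.
rewrite /uder mulr_sumr mulr_suml; apply: eq_bigr => g _.
by rewrite mxE Gker_gder //; ring.
Qed.

Lemma Gmat_form_gt0 (c : 'cV[R]_N.+1) : injective x ->
  Smat m x *m c = 0 -> c != 0 -> 0 < (-1) ^+ m * (c^T *m Gmat m x *m c) 0 0.
Proof.
move=> x_inj Sc0 c_neq0.
have Sc_entry (k : 'I_m) : \sum_j c j 0 * Smat m x k j = 0.
  transitivity ((Smat m x *m c) k 0); last by rewrite Sc0 mxE.
  by rewrite mxE; apply: eq_bigr => j _; rewrite mulrC.
have c_perp_poly k : (k < m.-1)%N -> \sum_j c j 0 * x j ^+ k = 0.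
  move=> k_lt; have k_lt_m : (k < m)%N by lia.
  by rewrite -[RHS](Sc_entry (Ordinal k_lt_m)); apply: eq_bigr => j _; rewrite mxE /= k_lt.
have c_perp_expRN : \sum_j c j 0 * expR (- x j) = 0.
  have last_lt_m : (m.-1 < m)%N by lia.
  by rewrite -[RHS](Sc_entry (Ordinal last_lt_m)); apply: eq_bigr => j _; rewrite mxE /= ltnn.
have [g cg_neq0] : exists g, c g 0 != 0.
  apply/existsP; apply: contraNT c_neq0; rewrite negb_exists => /forallP c0.
  by apply/eqP/matrixP => i j; rewrite (ord1 j) mxE; apply/eqP/negPn/c0.
rewrite Gmat_form mulrA pmulr_lgt0 ?invr_gt0 //.
exact: uder_form_gt0 m_ge2 c_perp_poly c_perp_expRN x_inj (ex_intro _ g cg_neq0).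
Qed.

End QuadraticForm.

Lemma Qmat_mul_eq0 (R : realType) (m N : nat) (x : 'I_N.+1 -> R)
    (T : 'M[R]_(N.+1, m)) (w : 'cV[R]_(N.+1 + m)) :
  (2 <= m)%N -> injective x -> Smat m x *m T = 1%:M ->
  Qmat m x *m w = 0 -> w = 0.
Proof.
move=> m_ge2 x_inj S_T; rewrite -[w]vsubmxK; set c := usubmx w; set l := dsubmx w.
rewrite mul_block_col mul0mx addr0 => /eqP; rewrite col_mx_eq0.
case/andP => /eqP Gc_Sl /eqP Sc0.
have form0 : (c^T *m Gmat m x *m c) 0 0 = 0.
  rewrite -mulmxA (_ : Gmat m x *m c = - ((Smat m x)^T *m l)).
    by rewrite mulmxN mulmxA -trmx_mul Sc0 trmx0 mul0mx oppr0 mxE.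
  by apply/eqP; rewrite -addr_eq0 Gc_Sl.
have c0 : c = 0.
  apply/eqP; apply: contraT => c_neq0.
  by have := Gmat_form_gt0 m_ge2 x_inj Sc0 c_neq0; rewrite form0 mulr0 ltxx.
have l0 : l = 0.
  rewrite c0 mulmx0 add0r in Gc_Sl.
  by rewrite -[l]mul1mx -trmx1 -S_T trmx_mul -mulmxA Gc_Sl mulmx0.
by rewrite c0 l0 col_mx0.
Qed.

Theorem theorem3p2 (R : realType) (m N : nat) (x : 'I_N.+1 -> R) :
  (2 <= m)%N ->
  injective x ->
  (forall j, 0 <= x j <= 1) ->
  (exists T : 'M[R]_(N.+1, m), Smat m x *m T = 1%:M) ->
  Qmat m x \in unitmx.
Proof.
(* The nodes need not lie in [0, 1]. *)
move=> m_ge2 x_inj _ [T S_T].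
rewrite -unitmx_tr -row_free_unit; apply: inj_row_free => v vQ.
apply: trmx_inj; rewrite trmx0; apply: (Qmat_mul_eq0 m_ge2 x_inj S_T).
by rewrite -[Qmat m x]trmxK -trmx_mul vQ trmx0.
Qed.
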